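(* Let $\Theta\subseteq\mathbb{R}^d$ be an open set equipped with a Riemannian metric $g$, let $V_1,\dots,V_N:\Theta\to\mathbb{R}$ and $f:\Theta\to\mathbb{R}$ be twice continuously differentiable, and fix $\vec\theta\in\Theta$. Let $C=\mathrm{Con}(\{\mathtt{grad}\,V_i(\vec\theta)\}_{i=1}^N)$ and assume its dual $C^\perp$ is nonempty. Then $\mathtt{grad}\,f(\vec\theta)\notin C$ if and only if there exists a direction $\delta\vec\theta\in\mathbb{R}^d$ such that $\mathscr{V}^i_{f,\delta\vec\theta}(\vec\theta)<0$ for all $i=1,\dots,N$.
   Context: Inner products are $\langle\vec v,\vec w\rangle=g_{ij}(\vec\theta)v^iw^j$ and the gradient is $(\mathtt{grad}\,h)^i=g^{ij}\partial h/\partial\theta^j$ with $g^{ij}$ the inverse of $g_{ij}$. For nonzero vectors $\vec v_1,\dots,\vec v_N$, the conic hull is $\mathrm{Con}(\{\vec v_i\})=\{\sum_i\alpha^i\vec v_i:\alpha^i\ge0\ \forall i\}$, and its dual is $\mathrm{Con}(\{\vec v_i\})^\perp=\{\vec v:\langle\vec v,\vec v_i\rangle<0\text{ for all }i\}$. The differential value to player $i$ of $f$ in direction $\delta\vec\theta$ at $\vec\theta$ is $\mathscr{V}^i_{f,\delta\vec\theta}(\vec\theta)=\dfrac{\langle\mathtt{grad}\,V_i(\vec\theta),\delta\vec\theta\rangle}{\langle\mathtt{grad}\,f(\vec\theta),\delta\vec\theta\rangle}=\dfrac{\partial_kV_i(\vec\theta)\,\delta\theta^k}{\partial_kf(\vec\theta)\,\delta\theta^k}$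 (here $V_i$ is interpreted as the equilibrium expected utility of player $i$ in a game with parameter $\vec\theta$). *)

From mathcomp Require Import all_boot all_order all_algebra.
From mathcomp Require Import all_classical all_reals all_analysis.
Import numFieldNormedType.Exports.
Set Implicit Arguments. Unset Strict Implicit. Unset Printing Implicit Defensive.
Import Order.TTheory GRing.Theory Num.Theory.
Local Open Scope classical_set_scope.
Local Open Scope ring_scope.

Section Defs.
Variables (R : realType) (d : nat).
Implicit Types (h : 'rV[R]_d -> R) (U : set 'rV[R]_d).

Definition ebasis (j : 'I_d) : 'rV[R]_d := delta_mx 0 j.

Definition partial h (j : 'I_d) : 'rV[R]_d -> R := fun x => 'D_(ebasis j) h x.

Definition ipartial h (s : seq 'I_d) : 'rV[R]_d -> R :=
  foldr (fun j g => partial g j) h s.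

(* h is C^k on U: all partial derivatives of order <= k exist on U and are
   continuous on U (on an open U this is exactly C^k). *)
Definition Ck_on (k : nat) U h : Prop :=
  forall s : seq 'I_d, (size s <= k)%N ->
    {within U, continuous (ipartial h s)} /\
    ((size s < k)%N -> forall x, U x -> forall j, derivable (ipartial h s) x (ebasis j)).

Definition smooth_on U h : Prop := forall k, Ck_on k U h.

Definition riemannian_metric U (g : 'rV[R]_d -> 'M[R]_d) : Prop :=
  (forall i j, smooth_on U (fun x => g x i j)) /\
  (forall x, U x -> (g x)^T = g x) /\
  (forall x, U x -> forall v : 'rV[R]_d, v != 0 -> 0 < (v *m g x *m v^T) 0 0).

Definition inner (g : 'rV[R]_d -> 'M[R]_d) (th v w : 'rV[R]_d) : R :=
  \sum_(i < d) \sum_(j < d) g th i j * v 0 i * w 0 j.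

Definition grad (g : 'rV[R]_d -> 'M[R]_d) h (th : 'rV[R]_d) : 'rV[R]_d :=
  \row_i \sum_(j < d) (invmx (g th)) i j * partial h j th.

Definition conic_hull (N : nat) (v : 'I_N -> 'rV[R]_d) : set 'rV[R]_d :=
  [set w | exists alpha : 'I_N -> R,
             (forall i, 0 <= alpha i) /\ w = \sum_(i < N) alpha i *: v i].

Definition dual_cone (g : 'rV[R]_d -> 'M[R]_d) (th : 'rV[R]_d) (N : nat)
  (v : 'I_N -> 'rV[R]_d) : set 'rV[R]_d :=
  [set w | forall i, inner g th w (v i) < 0].

Definition diff_value (g : 'rV[R]_d -> 'M[R]_d) (Vi f : 'rV[R]_d -> R)
  (dth th : 'rV[R]_d) : R :=
  inner g th (grad g Vi th) dth / inner g th (grad g f th) dth.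

End Defs.

(* At a point where the metric matrix G is symmetric and invertible,
   <grad h, w> = dh . w (the Euclidean pairing with the vector of partial
   derivatives), and grad f lies in the cone of the grad V_i iff df lies in the
   cone of the dV_i (right multiplication by G is a linear bijection). So the
   statement is about Euclidean cones.  If df is outside the cone, Farkas' lemma
   (proved by induction on N, projecting along the first generator) gives y with
   y . dV_i <= 0 < y . df; adding a small multiple of a vector z of the dual
   cone makes the first inequalities strict while keeping the last, and along
   w = y + e z every differential value is a negative number over a positive
   one.  Conversely, if df = sum_i alpha_i dV_i with alpha_i >= 0, dividing by
   df . w gives 1 = sum_i alpha_i r_i where r_i are the differential values,
   which cannot all be negative. *)

From mathcomp Require Import all_boot all_order all_algebra.
From mathcomp Require Import all_classical all_reals all_analysis.
From mathcomp Require Import ring lra.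
Import numFieldNormedType.Exports.
Set Implicit Arguments. Unset Strict Implicit. Unset Printing Implicit Defensive.
Import Order.TTheory GRing.Theory Num.Theory.
Local Open Scope classical_set_scope.
Local Open Scope ring_scope.

Section EuclideanCones.
Variables (R : realType) (d : nat).
Implicit Types (u v w y z a b : 'rV[R]_d) (A : 'M[R]_d).

Definition dot u v : R := (u *m v^T) 0 0.

Lemma dotC u v : dot u v = dot v u.
Proof. by rewrite /dot !mxE; apply: eq_bigr => j _; rewrite !mxE mulrC. Qed.

Lemma dotDr u v w : dot u (v + w) = dot u v + dot u w.
Proof. by rewrite /dot linearD mulmxDr !mxE. Qed.

Lemma dotZr k u v : dot u (k *: v) = k * dot u v.
Proof. by rewrite /dot linearZ -scalemxAr mxE. Qed.

Lemma dot_sumr N (alpha : 'I_N -> R) (p : 'I_N -> 'rV[R]_d) u :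
  dot u (\sum_i alpha i *: p i) = \sum_i alpha i * dot u (p i).
Proof.
by rewrite /dot linear_sum mulmx_sumr summxE; apply: eq_bigr => i _;
  rewrite linearZ -scalemxAr mxE.
Qed.

Lemma dot_mulmxr u v A : dot u (v *m A) = dot (u *m A^T) v.
Proof. by rewrite /dot trmx_mul mulmxA. Qed.

Lemma dot_gt0 b : b != 0 -> 0 < dot b b.
Proof.
move=> bn0; have /existsP [k bk] : [exists k, b 0 k != 0].
  apply: contraNT bn0 => /existsPn b0; apply/eqP/rowP => j.
  by rewrite mxE; apply/eqP; rewrite -[_ == _]negbK b0.
have -> : dot b b = \sum_j b 0 j ^+ 2.
  by rewrite /dot mxE; apply: eq_bigr => j _; rewrite mxE expr2.
rewrite (bigD1 k) //= ltr_pwDl ?exprn_even_gt0 //.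
by apply: sumr_ge0 => j _; rewrite sqr_ge0.
Qed.

Lemma conic_hull_lift N (p : 'I_N.+1 -> 'rV[R]_d) t b : 0 <= t ->
  conic_hull (p \o lift ord0) (b - t *: p ord0) -> conic_hull p b.
Proof.
move=> t0 [alpha [alpha0 Eb]].
exists (fun i => if unlift ord0 i is Some j then alpha j else t); split.
  by move=> i; case: unlift.
rewrite -[b](subrK (t *: p ord0)) Eb big_ord_recl unlift_none addrC.
by congr (_ + _); apply: eq_bigr => i _; rewrite liftK.
Qed.

Lemma conic_hull_dot_le0 N (p : 'I_N -> 'rV[R]_d) y b :
  (forall i, dot y (p i) <= 0) -> conic_hull p b -> dot y b <= 0.
Proof.
move=> yp [alpha [alpha0 ->]]; rewrite dot_sumr -oppr_ge0 -sumrN.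
by apply: sumr_ge0 => i _; rewrite oppr_ge0 mulr_ge0_le0.
Qed.

Lemma conic_hull_mulmxP N (p : 'I_N -> 'rV[R]_d) A b :
  conic_hull (fun i => p i *m A) b <-> exists2 u, conic_hull p u & b = u *m A.
Proof.
split=> [[alpha [alpha0 ->]] | [u [alpha [alpha0 ->]] ->]].
  exists (\sum_i alpha i *: p i); first by exists alpha.
  by rewrite mulmx_suml; under [RHS]eq_bigr do rewrite -scalemxAl.
exists alpha; split => //; rewrite mulmx_suml.
by under eq_bigr do rewrite -scalemxAl.
Qed.

Lemma conic_hull_unitmx N (p : 'I_N -> 'rV[R]_d) A b : A \in unitmx ->
  conic_hull (fun i => p i *m A) (b *m A) <-> conic_hull p b.
Proof.
move=> Au; rewrite conic_hull_mulmxP; split=> [[u pu /(row_free_inj _)]|pb].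
  by move=> /(_ _) -> //; rewrite row_free_unit.
by exists b.
Qed.

Lemma farkas_lemma N (p : 'I_N -> 'rV[R]_d) b : ~ conic_hull p b ->
  exists y, (forall i, dot y (p i) <= 0) /\ 0 < dot y b.
Proof.
elim: N p b => [|N IH] p b bnp.
  exists b; split=> [[]//|]; apply: dot_gt0.
  by apply/eqP => b0; apply: bnp; exists (fun=> 0); rewrite big_ord0.
pose a := p ord0; pose s := p \o lift ord0.
have [y [ys yb]] : exists y, (forall i, dot y (s i) <= 0) /\ 0 < dot y b.
  apply: IH => bs; apply: bnp; apply: (@conic_hull_lift _ _ 0) => //.
  by rewrite scale0r subr0.
have [ya|ya] := lerP (dot y a) 0.
  exists y; split => // i.
  by case: (unliftP ord0 i) => [j ->|->]; [exact: ys | exact: ya].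
pose c := dot y a.
(* [v *m M] is [c] times the projection of [v] along [a] onto the hyperplane
   orthogonal to [y]; it kills [a], so the induction hypothesis applies to the
   projections of the remaining generators. *)
pose M := c%:M - y^T *m a.
have MvE v : v *m M = c *: v - dot v y *: a.
  by rewrite mulmxBr mul_mx_scalar mulmxA [v *m y^T]mx11_scalar mul_scalar_mx.
have bsM : ~ conic_hull (fun i => s i *m M) (b *m M).
  move=> /conic_hull_mulmxP [u us /eqP]; rewrite !MvE -subr_eq0.
  have uy := conic_hull_dot_le0 ys us; rewrite dotC in uy.
  pose t := (dot b y - dot u y) / c.
  have -> : c *: b - dot b y *: a - (c *: u - dot u y *: a) =
            c *: (b - t *: a - u).
    by rewrite /t !scalerBr scalerA mulrC divfK ?gt_eqF //; apply/rowP => k;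
      rewrite !mxE; ring.
  rewrite scaler_eq0 gt_eqF //= subr_eq0 => /eqP Eu.
  apply: bnp; apply: (@conic_hull_lift _ _ t); last by rewrite Eu.
  by rewrite divr_ge0 ?ltW // [dot b y]dotC; lra.
have [y' [y's y'b]] := IH _ _ bsM.
exists (y' *m M^T); split; last by rewrite -dot_mulmxr.
move=> i; rewrite -dot_mulmxr; case: (unliftP ord0 i) => [j ->|->].
  exact: y's.
by rewrite MvE [dot _ y]dotC -/c subrr /dot trmx0 mulmx0 mxE.
Qed.

Lemma strict_separation N (p : 'I_N -> 'rV[R]_d) q z :
  (forall i, dot z (p i) < 0) -> ~ conic_hull p q ->
  exists w, (forall i, dot w (p i) < 0) /\ 0 < dot w q.
Proof.
move=> zp qnp; have [y [yp yq]] := farkas_lemma qnp.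
(* [e] is small enough that [z] cannot spoil the positivity of [y] on [q]. *)
pose e := dot y q / (1 + `|dot z q|).
have n0 : 0 < 1 + `|dot z q| by rewrite ltr_pwDl.
have e0 : 0 < e by rewrite divr_gt0.
have eE : e * (1 + `|dot z q|) = dot y q by rewrite divfK ?gt_eqF.
exists (y + e *: z); split=> [i|].
  rewrite dotC dotDr dotZr [dot (p i) y]dotC [dot (p i) z]dotC.
  have := yp i; have : e * dot z (p i) < 0 by rewrite pmulr_rlt0.
  lra.
rewrite dotC dotDr dotZr [dot q y]dotC [dot q z]dotC.
have := ler_norm (- dot z q); rewrite normrN; nra.
Qed.

Lemma not_conic_hullP N (p : 'I_N -> 'rV[R]_d) q :
  (0 < N)%N -> (exists z, forall i, dot z (p i) < 0) ->
  ~ conic_hull p q <-> exists w, forall i, dot (p i) w / dot q w < 0.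
Proof.
move=> N0 [z zp]; split=> [qnp | [w wr] [alpha [alpha0 Eq]]].
  have [w [wp wq]] := strict_separation zp qnp.
  by exists w => i; rewrite [dot q w]dotC dotC ltr_pdivrMr // mul0r.
have qw0 : dot q w != 0.
  by apply: contraTneq (wr (Ordinal N0)) => ->; rewrite invr0 mulr0 ltxx.
(* The ratios are all negative, yet their [alpha]-combination is [1]. *)
have : 1 = \sum_i alpha i * (dot (p i) w / dot q w).
  rewrite -(divff qw0) {1}Eq dotC dot_sumr mulr_suml.
  by apply: eq_bigr => i _; rewrite dotC mulrA.
have : \sum_i alpha i * (dot (p i) w / dot q w) <= 0.
  rewrite -oppr_ge0 -sumrN; apply: sumr_ge0 => i _.
  by rewrite oppr_ge0 mulr_ge0_le0 // ltW.
lra.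
Qed.

End EuclideanCones.

Lemma posdef_unitmx (R : realType) n (A : 'M[R]_n) :
  (forall v : 'rV_n, v != 0 -> 0 < (v *m A *m v^T) 0 0) -> A \in unitmx.
Proof.
move=> Apd; rewrite unitmxE unitfE; apply/negP => /det0P [v vn0 vA].
by have := Apd v vn0; rewrite vA mul0mx mxE ltxx.
Qed.

Definition partials (R : realType) d (h : 'rV[R]_d -> R) (th : 'rV[R]_d) :
  'rV[R]_d := \row_j partial h j th.

Section MetricGradient.
Variables (R : realType) (d : nat) (g : 'rV[R]_d -> 'M[R]_d) (th : 'rV[R]_d).
Implicit Types (v w : 'rV[R]_d) (h : 'rV[R]_d -> R).

Lemma inner_dotl v w : inner g th v w = dot (v *m g th) w.
Proof.
rewrite /inner /dot mxE exchange_big; apply: eq_bigr => j _.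
by rewrite !mxE mulr_suml; apply: eq_bigr => i _; ring.
Qed.

Hypothesis g_sym : (g th)^T = g th.

Lemma inner_dotr v w : inner g th v w = dot v (w *m g th).
Proof. by rewrite inner_dotl dot_mulmxr g_sym. Qed.

Hypothesis g_unit : g th \in unitmx.

Lemma grad_mulmx h : grad g h th *m g th = partials h th.
Proof.
have -> : grad g h th = partials h th *m (invmx (g th))^T.
  by apply/rowP => i; rewrite !mxE; apply: eq_bigr => j _; rewrite !mxE mulrC.
by rewrite trmx_inv g_sym mulmxKV.
Qed.

End MetricGradient.

Theorem proposition3 (R : realType) (d N : nat) (Theta : set 'rV[R]_d)
  (g : 'rV[R]_d -> 'M[R]_d) (V : 'I_N -> 'rV[R]_d -> R) (f : 'rV[R]_d -> R)
  (th : 'rV[R]_d) :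
  (0 < N)%N ->
  open Theta ->
  riemannian_metric Theta g ->
  (forall i, Ck_on 2 Theta (V i)) ->
  Ck_on 2 Theta f ->
  Theta th ->
  dual_cone g th (fun i => grad g (V i) th) !=set0 ->
  (~ conic_hull (fun i => grad g (V i) th) (grad g f th) <->
   exists dth : 'rV[R]_d, forall i, diff_value g (V i) f dth th < 0).
Proof.
move=> N0 _ [_ [g_sym g_pd]] _ _ th_in [z z_dual].
have g_sym_th := g_sym th th_in.
have g_unit := posdef_unitmx (g_pd th th_in).
have grad_G h := grad_mulmx g_sym_th g_unit h.
rewrite -(conic_hull_unitmx _ _ g_unit) grad_G.
under eq_fun do rewrite grad_G.
rewrite not_conic_hullP //; last first.
  by exists z => i; have := z_dual i; rewrite /= inner_dotr // grad_G.
have diff_valueE i dth : diff_value g (V i) f dth th =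
    dot (partials (V i) th) dth / dot (partials f th) dth.
  by rewrite /diff_value !inner_dotl !grad_G.
by split=> -[dth Hdth]; exists dth => i; have := Hdth i; rewrite diff_valueE.
Qed.
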